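(* Let $\alpha=\sqrt{a_{ij}y^iy^j}$ be a Riemannian metric and $\beta=b_iy^i$ a $1$-form on a manifold, with $b=\|\beta\|_\alpha$, satisfying ${}^\alpha R^i{}_j=\mu(\alpha^2\delta^i{}_j-y^iy_j)$ and $b_{i|j}=c(x)a_{ij}$ with $c^2=\kappa-\mu b^2$, where $\mu<0$ and $\kappa=0$. Define $\bar\alpha:=\alpha/b$ and $\bar\beta:=\beta/b^2$. Then ${}^{\bar\alpha}R^i{}_j=0$ and $\bar b_{i|j}=0$. In this case $\bar b=1$.
   Context: ${}^\alpha R^i{}_j$ denotes the Riemann curvature tensor of $\alpha$, $y_j=a_{jk}y^k$, $b_{i|j}$ the covariant derivative of $\beta$ with respect to $\alpha$; ${}^{\bar\alpha}R^i{}_j$ is the Riemann curvature tensor of $\bar\alpha$, $\bar b_{i|j}$ the covariant derivative of $\bar\beta=\bar b_iy^i$ with respect to $\bar\alpha$, and $\bar b=\|\bar\beta\|_{\bar\alpha}$. *)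

(* Local-coordinate (chart) formalization of
   Riemannian geometry on an open set U of R^n (points are 'rV[R]_n). *)
From HB Require Import structures.
From mathcomp Require Import all_boot all_order all_algebra.
From mathcomp Require Import all_classical all_reals all_analysis.
Set Implicit Arguments. Unset Strict Implicit. Unset Printing Implicit Defensive.
Import Order.TTheory GRing.Theory Num.Theory.
Import numFieldNormedType.Exports.
Local Open Scope classical_set_scope.
Local Open Scope ring_scope.

Section Defs.
Variables (R : realType) (n : nat).
Notation pt := 'rV[R]_n.

Definition ecoord (k : 'I_n) : pt := delta_mx 0 k.

Definition pd (k : 'I_n) (f : pt -> R) : pt -> R :=
  fun x => derive f x (ecoord k).

Fixpoint iterpd (ks : seq 'I_n) (f : pt -> R) : pt -> R :=
  match ks with
  | [::] => f
  | k :: ks' => pd k (iterpd ks' f)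
  end.

Definition smooth_on (U : set pt) (f : pt -> R) : Prop :=
  forall (ks : seq 'I_n) (x : pt), U x ->
    {for x, continuous (iterpd ks f)} /\
    forall k : 'I_n, derivable (iterpd ks f) x (ecoord k).

Definition riemannian_on (U : set pt) (a : pt -> 'M[R]_n) : Prop :=
  (forall i j : 'I_n, smooth_on U (fun z => a z i j)) /\
  (forall x, U x -> (a x)^T = a x) /\
  (forall x, U x -> forall y : pt, y != 0 -> 0 < (y *m a x *m y^T) 0 0).

Definition oneform_on (U : set pt) (b : pt -> pt) : Prop :=
  forall i : 'I_n, smooth_on U (fun z => b z 0 i).

Definition alpha2 (a : pt -> 'M[R]_n) (x y : pt) : R :=
  \sum_i \sum_j a x i j * y 0 i * y 0 j.

Definition ylow (a : pt -> 'M[R]_n) (x y : pt) (j : 'I_n) : R :=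
  \sum_k a x j k * y 0 k.

Definition formnorm (a : pt -> 'M[R]_n) (b : pt -> pt) (x : pt) : R :=
  Num.sqrt ((b x *m invmx (a x) *m (b x)^T) 0 0).

Definition christoffel (a : pt -> 'M[R]_n) (i j k : 'I_n) (x : pt) : R :=
  2^-1 * \sum_l invmx (a x) i l *
    (pd j (fun z => a z l k) x + pd k (fun z => a z l j) x
     - pd l (fun z => a z j k) x).

(* Riemann curvature R^i_k(x,y) of the spray G^i = 1/2 Gamma^i_{jl} y^j y^l:
   R^i_k = 2 d_{x^k} G^i - y^j d_{x^j} d_{y^k} G^i
           + 2 G^j d_{y^j} d_{y^k} G^i - d_{y^j} G^i d_{y^k} G^j *)
Definition riemann (a : pt -> 'M[R]_n) (x y : pt) (i k : 'I_n) : R :=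
  \sum_j \sum_l (pd k (christoffel a i j l) x * y 0 j * y 0 l)
  - \sum_j \sum_l (pd j (christoffel a i l k) x * y 0 j * y 0 l)
  + \sum_j \sum_p \sum_q
      (christoffel a j p q x * y 0 p * y 0 q * christoffel a i j k x)
  - \sum_j \sum_p \sum_q
      (christoffel a i j p x * y 0 p * christoffel a j k q x * y 0 q).

Definition covd (a : pt -> 'M[R]_n) (b : pt -> pt) (x : pt) (i j : 'I_n) : R :=
  pd j (fun z => b z 0 i) x - \sum_k christoffel a k i j x * b x 0 k.

End Defs.

From Pilot Require Import Defs.
From HB Require Import structures.
From mathcomp Require Import all_boot all_order all_algebra.
From mathcomp Require Import all_classical all_reals all_analysis.
From mathcomp Require Import ring.
Import Order.TTheory GRing.Theory Num.Theory.
Import numFieldNormedType.Exports.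
Local Open Scope classical_set_scope.
Local Open Scope ring_scope.

(* Put q := |beta|^2_alpha, so that abar = a / q is a conformal change of a.  As
   b_{i|j} = c a_ij, the gradient of q is 2 c b, hence the Christoffel symbols of abar
   are those of a shifted by -phi_j delta^i_k - phi_k delta^i_j + a_jk phi^i, where
   phi_j := c b_j / q.  With kappa = 0, i.e. c^2 = -mu q, the covariant derivative of
   phi is phi_{j|m} = -phi_j phi_m - mu a_jm.  Inserting the shift into the curvature
   of the geodesic spray, everything cancels except -mu (alpha^2 delta^i_k - y^i y_k),
   which is minus the curvature of alpha: abar is flat.  The same shift gives
   bbar_{i|j} = 0, and |bbar|^2_abar = q^-2 q q = 1. *)

Definition kdelta {R : nzRingType} {n : nat} (i j : 'I_n) : R := (i == j)%:R.

Lemma kdeltaC {R : nzRingType} {n : nat} (i j : 'I_n) :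
  kdelta i j = kdelta j i :> R.
Proof. by rewrite /kdelta eq_sym. Qed.

Lemma sumr_kdeltal {R : nzRingType} {n : nat} (F : 'I_n -> R) i :
  \sum_j kdelta i j * F j = F i.
Proof.
rewrite (bigD1 i) //= /kdelta eqxx mul1r big1 ?addr0 // => j /negbTE.
by rewrite eq_sym => ->; rewrite mul0r.
Qed.

Lemma sumr_kdeltar {R : nzRingType} {n : nat} (F : 'I_n -> R) i :
  \sum_j F j * kdelta j i = F i.
Proof.
rewrite (bigD1 i) //= /kdelta eqxx mulr1 big1 ?addr0 // => j /negbTE ->.
by rewrite mulr0.
Qed.

Section ConformalSprayCurvature.
Context {R : comRingType} {n : nat}.
(* [G i j k], [dG m i j k], [f j], [g i] play the roles of Gamma^i_jk, d_m Gamma^i_jk,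
   phi_j and phi^i; [dphi_low], [dphi_up] and [dmetric] are the values that d_m phi_j,
   d_m phi^i and d_m a_jk take in the geometric situation. *)
Variables (G : 'I_n -> 'I_n -> 'I_n -> R) (dG : 'I_n -> 'I_n -> 'I_n -> 'I_n -> R)
  (a : 'I_n -> 'I_n -> R) (f g y : 'I_n -> R) (mu : R).
Hypotheses (G_sym : forall i j k, G i j k = G i k j)
  (a_sym : forall j k, a j k = a k j)
  (a_g : forall j, \sum_i a j i * g i = f j)
  (f_g : \sum_i f i * g i = - mu).

(* [Defs.riemann a x y] is [spray_curvature] for the Christoffel symbols of [a] at [x]. *)
Definition spray_curvature (G' : 'I_n -> 'I_n -> 'I_n -> R)
    (dG' : 'I_n -> 'I_n -> 'I_n -> 'I_n -> R) i k :=
  \sum_j \sum_l (dG' k i j l * y j * y l)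
  - \sum_j \sum_l (dG' j i l k * y j * y l)
  + \sum_j \sum_p \sum_q (G' j p q * y p * y q * G' i j k)
  - \sum_j \sum_p \sum_q (G' i j p * y p * G' j k q * y q).

Definition conf_shift i j k := - f j * kdelta i k - f k * kdelta i j + a j k * g i.
Definition dphi_low m j := \sum_p G p j m * f p - f j * f m - mu * a j m.
Definition dphi_up m i := - (\sum_p G i m p * g p) - g i * f m - mu * kdelta i m.
Definition dmetric m j k := \sum_p (a p k * G p j m + a j p * G p k m).
Definition dconf_shift m i j k :=
  - dphi_low m j * kdelta i k - dphi_low m k * kdelta i j
  + dmetric m j k * g i + a j k * dphi_up m i.

Definition Gconf i j k := G i j k + conf_shift i j k.
Definition dGconf m i j k := dG m i j k + dconf_shift m i j k.

(* Contractions with y, named after their factors: e.g. [Gyf k] = Gamma^p_kq y^q phi_p. *)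
Definition fy := \sum_j f j * y j.
Definition ayy := \sum_j \sum_l a j l * y j * y l.
Definition yl k := \sum_j a k j * y j.
Definition Gy i k := \sum_q G i k q * y q.
Definition Gyy i := \sum_p \sum_q G i p q * y p * y q.
Definition Gg i k := \sum_p G i k p * g p.
Definition Gyf k := \sum_p Gy p k * f p.
Definition Gyg i := \sum_p Gy i p * g p.
Definition ylGy k := \sum_p yl p * Gy p k.
Definition Gyyf := \sum_p Gyy p * f p.
Definition aGyy k := \sum_p a p k * Gyy p.

Lemma sum_a_y k : \sum_j a j k * y j = yl k.
Proof. by apply: eq_bigr => j _; rewrite a_sym. Qed.

Lemma sum_a_g k : \sum_j a j k * g j = f k.
Proof. by rewrite -a_g; apply: eq_bigr => j _; rewrite a_sym. Qed.

Lemma sum_yl_g : \sum_j yl j * g j = fy.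
Proof.
rewrite /fy; under eq_bigr do rewrite mulr_suml.
rewrite exchange_big /=; apply: eq_bigr => m _.
by rewrite -sum_a_g mulr_suml; apply: eq_bigr => j _; ring.
Qed.

Lemma sum_yl_y : \sum_j yl j * y j = ayy.
Proof.
by apply: eq_bigr => j _; rewrite mulr_suml; apply: eq_bigr => l _; ring.
Qed.

Lemma sum_G_y q k : \sum_j G q j k * y j = Gy q k.
Proof. by apply: eq_bigr => j _; rewrite G_sym. Qed.

Lemma sum_Gy_y i : \sum_j Gy i j * y j = Gyy i.
Proof.
by apply: eq_bigr => j _; rewrite mulr_suml; apply: eq_bigr => q _; ring.
Qed.

Lemma dphi_lowC m j : dphi_low m j = dphi_low j m.
Proof.
rewrite /dphi_low a_sym (mulrC (f j)); congr (_ - _ - _).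
by apply: eq_bigr => p _; rewrite G_sym.
Qed.

Lemma sum_dphi_low_y k : \sum_j dphi_low k j * y j = Gyf k - fy * f k - mu * yl k.
Proof.
transitivity (\sum_j ((\sum_q G q j k * f q) * y j - (f j * y j) * f k
                      - mu * (a j k * y j))).
  by apply: eq_bigr => j _; rewrite /dphi_low; ring.
rewrite !big_split /= !sumrN -!mulr_suml -!mulr_sumr sum_a_y; congr (_ - _ - _).
under eq_bigr do rewrite mulr_suml.
rewrite exchange_big /=; apply: eq_bigr => q _.
by rewrite -sum_G_y mulr_suml; apply: eq_bigr => j _; ring.
Qed.

Lemma sum_dphi_low_yy : \sum_j \sum_l dphi_low j l * y j * y l = Gyyf - fy ^+ 2 - mu * ayy.
Proof.
transitivity (\sum_j (\sum_l dphi_low j l * y l) * y j).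
  by apply: eq_bigr => j _; rewrite mulr_suml; apply: eq_bigr => l _; ring.
under eq_bigr do rewrite sum_dphi_low_y !mulrBl -!mulrA.
rewrite !sumrB -!mulr_sumr -/fy sum_yl_y -expr2; congr (_ - _ - _).
rewrite /Gyf; under eq_bigr do rewrite mulr_suml.
rewrite exchange_big /=; apply: eq_bigr => p _.
by rewrite -sum_Gy_y !mulr_suml; apply: eq_bigr => j _; ring.
Qed.

Lemma sum_dphi_up_y i : \sum_j dphi_up j i * y j = - Gyg i - g i * fy - mu * y i.
Proof.
transitivity (\sum_j (- ((\sum_q G i j q * g q) * y j) - g i * (f j * y j)
                      - mu * (kdelta i j * y j))).
  by apply: eq_bigr => j _; rewrite /dphi_up; ring.
rewrite !big_split /= !sumrN -!mulr_sumr sumr_kdeltal; congr (- _ - _ - _).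
under eq_bigr do rewrite mulr_suml.
rewrite exchange_big /=; apply: eq_bigr => q _.
by rewrite /Gy mulr_suml; apply: eq_bigr => j _; rewrite G_sym; ring.
Qed.

Lemma sum_dmetric_yy_l k : \sum_j \sum_l dmetric k j l * y j * y l = 2 * ylGy k.
Proof.
transitivity (\sum_p \sum_j \sum_l ((G p j k * y j) * (a p l * y l)
                                   + (a j p * y j) * (G p l k * y l))).
  rewrite [RHS]exchange_big; apply: eq_bigr => j _ /=.
  rewrite exchange_big; apply: eq_bigr => l _ /=.
  by rewrite /dmetric !mulr_suml; apply: eq_bigr => p _; ring.
rewrite /ylGy mulr_sumr; apply: eq_bigr => p _.
under eq_bigr do rewrite big_split /=.
by rewrite big_split /= -!big_distrlr /= -/(yl p) sum_G_y sum_a_y; ring.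
Qed.

Lemma sum_dmetric_yy_r k : \sum_j \sum_l dmetric j l k * y j * y l = aGyy k + ylGy k.
Proof.
transitivity (\sum_p \sum_j \sum_l (a p k * (G p l j * y l * y j)
                                   + (G p k j * y j) * (a l p * y l))).
  rewrite [RHS]exchange_big; apply: eq_bigr => j _ /=.
  rewrite exchange_big; apply: eq_bigr => l _ /=.
  by rewrite /dmetric !mulr_suml; apply: eq_bigr => p _; ring.
rewrite /aGyy /ylGy -big_split; apply: eq_bigr => p _ /=.
under eq_bigr do rewrite big_split /=.
rewrite big_split /= -big_distrlr /= sum_a_y -/(Gy p k) (mulrC (Gy p k)).
congr (_ + _); rewrite mulr_sumr exchange_big /=.
by apply: eq_bigr => l _; rewrite mulr_sumr.
Qed.

Lemma sum_dconf_shift_yy_l i k : \sum_j \sum_l dconf_shift k i j l * y j * y l =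
  - 2 * (Gyf k - fy * f k - mu * yl k) * y i + 2 * ylGy k * g i + ayy * dphi_up k i.
Proof.
transitivity (\sum_j \sum_l ((-1) * ((dphi_low k j * y j) * (kdelta i l * y l))
    + (-1) * ((kdelta i j * y j) * (dphi_low k l * y l))
    + g i * (dmetric k j l * y j * y l) + dphi_up k i * (a j l * y j * y l))).
  by apply: eq_bigr => j _; apply: eq_bigr => l _; rewrite /dconf_shift; ring.
under eq_bigr do rewrite !big_split /= -!mulr_sumr.
rewrite !big_split /= -!mulr_sumr -?mulr_suml !sumr_kdeltal.
by rewrite sum_dphi_low_y sum_dmetric_yy_l -/ayy; ring.
Qed.

Lemma sum_dconf_shift_yy_r i k : \sum_j \sum_l dconf_shift j i l k * y j * y l =
  - kdelta i k * (Gyyf - fy ^+ 2 - mu * ayy) - (Gyf k - fy * f k - mu * yl k) * y i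
  + g i * (aGyy k + ylGy k) + yl k * (- Gyg i - g i * fy - mu * y i).
Proof.
transitivity (\sum_j \sum_l ((- kdelta i k) * (dphi_low j l * y j * y l)
    + (-1) * ((dphi_low k j * y j) * (kdelta i l * y l))
    + g i * (dmetric j l k * y j * y l) + 1 * ((dphi_up j i * y j) * (a l k * y l)))).
  apply: eq_bigr => j _; apply: eq_bigr => l _.
  by rewrite /dconf_shift (dphi_lowC j k); ring.
under eq_bigr do rewrite !big_split /= -!mulr_sumr.
rewrite !big_split /= -!mulr_sumr -?mulr_suml !sumr_kdeltal.
rewrite sum_dphi_low_yy sum_dphi_low_y sum_dmetric_yy_r sum_dphi_up_y sum_a_y.
ring.
Qed.

Lemma Gconf_yy j : \sum_p \sum_q Gconf j p q * y p * y q = Gyy j - 2 * fy * y j + ayy * g j.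
Proof.
transitivity (\sum_p \sum_q (G j p q * y p * y q + (-1) * ((f p * y p) * (kdelta j q * y q))
  + (-1) * ((kdelta j p * y p) * (f q * y q)) + g j * (a p q * y p * y q))).
  by apply: eq_bigr => p _; apply: eq_bigr => q _; rewrite /Gconf /conf_shift; ring.
under eq_bigr do rewrite !big_split /= -!mulr_sumr.
rewrite !big_split /= -!mulr_sumr -?mulr_suml !sumr_kdeltal -/fy -/ayy -/(Gyy j).
ring.
Qed.

Lemma sum_Gconf_yy_Gconf i k :
  \sum_j \sum_p \sum_q (Gconf j p q * y p * y q * Gconf i j k) =
  \sum_j \sum_p \sum_q (G j p q * y p * y q * G i j k)
  - Gyyf * kdelta i k - Gyy i * f k + aGyy k * g i - 2 * fy * Gy i k + ayy * Gg i k
  + 2 * fy ^+ 2 * kdelta i k + 2 * fy * f k * y i - 2 * fy * yl k * g i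
  + ayy * mu * kdelta i k.
Proof.
have sum_yy (H : 'I_n -> 'I_n -> 'I_n -> R) j :
    \sum_p \sum_q (H j p q * y p * y q * H i j k) = (\sum_p \sum_q H j p q * y p * y q) * H i j k.
  by rewrite mulr_suml; apply: eq_bigr => p _; rewrite mulr_suml.
under eq_bigr do rewrite sum_yy Gconf_yy.
under [in RHS]eq_bigr do rewrite sum_yy -/(Gyy _).
transitivity (\sum_j (Gyy j * G i j k + (- kdelta i k) * (Gyy j * f j) + (- f k) * (kdelta i j * Gyy j)
  + g i * (a j k * Gyy j) + (- 2 * fy) * (G i k j * y j) + ayy * (G i k j * g j)
  + (2 * fy * kdelta i k) * (f j * y j) + (2 * fy * f k) * (kdelta i j * y j)
  + (- 2 * fy * g i) * (a j k * y j) + (- ayy * kdelta i k) * (f j * g j)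
  + (- ayy * f k) * (kdelta i j * g j) + (ayy * g i) * (a j k * g j))).
  by apply: eq_bigr => j _; rewrite /Gconf /conf_shift -(G_sym i j k); ring.
rewrite !big_split /= -!mulr_sumr !sumr_kdeltal sum_a_y sum_a_g f_g.
by rewrite -/(Gy i k) -/(Gg i k) -/fy -/Gyyf -/(aGyy k); ring.
Qed.

Lemma Gconf_y i j : \sum_p Gconf i j p * y p = Gy i j - f j * y i - fy * kdelta i j + yl j * g i.
Proof.
transitivity (\sum_q (G i j q * y q + (- f j) * (kdelta i q * y q)
  + (- kdelta i j) * (f q * y q) + g i * (a j q * y q))).
  by apply: eq_bigr => q _; rewrite /Gconf /conf_shift; ring.
by rewrite !big_split /= -!mulr_sumr sumr_kdeltal -/fy -/(yl j) -/(Gy i j); ring.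
Qed.

Lemma sum_Gconf_y_Gconf_y i k :
  \sum_j \sum_p \sum_q (Gconf i j p * y p * Gconf j k q * y q) =
  \sum_j \sum_p \sum_q (G i j p * y p * G j k q * y q)
  - f k * Gyy i - 2 * fy * Gy i k + yl k * Gyg i - y i * Gyf k + g i * ylGy k
  + 3 * fy * f k * y i + mu * y i * yl k + fy ^+ 2 * kdelta i k - fy * yl k * g i
  - ayy * g i * f k.
Proof.
have sum_yy (H : 'I_n -> 'I_n -> 'I_n -> R) j :
    \sum_p \sum_q (H i j p * y p * H j k q * y q) =
    (\sum_p H i j p * y p) * (\sum_q H j k q * y q).
  by rewrite big_distrlr; apply: eq_bigr => p _; apply: eq_bigr => q _ /=; ring.
under eq_bigr do rewrite sum_yy !Gconf_y.
under [in RHS]eq_bigr do rewrite sum_yy -/(Gy i _) -/(Gy _ k).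
transitivity (\sum_j (Gy i j * Gy j k + (- f k) * (Gy i j * y j) + (- fy) * (Gy i j * kdelta j k)
  + yl k * (Gy i j * g j) + (- y i) * (Gy j k * f j) + (- fy) * (kdelta i j * Gy j k)
  + g i * (yl j * Gy j k) + (y i * f k) * (f j * y j) + (fy * y i) * (f j * kdelta j k)
  + (- (y i * yl k)) * (f j * g j) + (fy * f k) * (kdelta i j * y j)
  + fy ^+ 2 * (kdelta i j * kdelta j k) + (- (fy * yl k)) * (kdelta i j * g j)
  + (- (g i * f k)) * (yl j * y j) + (- (g i * fy)) * (yl j * kdelta j k)
  + (g i * yl k) * (yl j * g j))).
  by apply: eq_bigr => j _; ring.
rewrite !big_split /= -!mulr_sumr !sumr_kdeltar !sumr_kdeltal.
by rewrite sum_Gy_y sum_yl_g sum_yl_y f_g -/fy -/(Gyg i) -/(Gyf k) -/(ylGy k); ring.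
Qed.

Theorem spray_curvature_conf i k :
  spray_curvature Gconf dGconf i k =
  spray_curvature G dG i k - mu * (ayy * kdelta i k - y i * yl k).
Proof.
have sumD (F1 F2 : 'I_n -> 'I_n -> R) :
    \sum_j \sum_l (F1 j l + F2 j l) * y j * y l =
    \sum_j \sum_l F1 j l * y j * y l + \sum_j \sum_l F2 j l * y j * y l.
  by rewrite -big_split; apply: eq_bigr => j _; rewrite -big_split; apply: eq_bigr => l _ /=; ring.
rewrite /spray_curvature sum_Gconf_yy_Gconf sum_Gconf_y_Gconf_y /dGconf.
rewrite (sumD _ (fun j l => dconf_shift k i j l)) (sumD _ (fun j l => dconf_shift j i l k)).
by rewrite sum_dconf_shift_yy_l sum_dconf_shift_yy_r /dphi_up -/(Gg i k); ring.
Qed.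

End ConformalSprayCurvature.

Section BigDerivable.
Context {R : numFieldType} {V : normedModType R}.

Lemma derivable_big_sum (I : Type) (r : seq I) (P : pred I) (F : I -> V -> R) x v :
  (forall i, P i -> derivable (F i) x v) ->
  derivable (fun w => \sum_(i <- r | P i) F i w) x v.
Proof.
move=> dF; rewrite -fct_sumE; elim/big_rec: _ => [|i h Pi dh].
  exact: derivable_cst.
by apply: derivableD => //; apply: dF.
Qed.

Lemma derivable_big_prod (I : Type) (r : seq I) (P : pred I) (F : I -> V -> R) x v :
  (forall i, P i -> derivable (F i) x v) ->
  derivable (fun w => \prod_(i <- r | P i) F i w) x v.
Proof.
move=> dF; rewrite -fct_prodE; elim/big_rec: _ => [|i h Pi dh].
  exact: derivable_cst.
by apply: derivableM => //; apply: dF.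
Qed.

Lemma derivable_det m (M : V -> 'M[R]_m) x v :
  (forall i j, derivable (fun w => M w i j) x v) -> derivable (fun w => \det (M w)) x v.
Proof.
move=> dM; apply: derivable_big_sum => s _.
by apply: derivableM; [exact: derivable_cst | apply: derivable_big_prod].
Qed.

End BigDerivable.

Section PartialDerivatives.
#[local] Set Implicit Arguments.
#[local] Unset Strict Implicit.
Context {R : realType} {n : nat}.
Variable U : set 'rV[R]_n.
Implicit Types (f g : 'rV[R]_n -> R) (x : 'rV[R]_n) (k : 'I_n).

Definition pderivable_on f := forall x, U x -> forall k, derivable f x (ecoord R k).

Lemma pderivable_on_cst (r : R) : pderivable_on (fun=> r).
Proof. by move=> x _ k; exact: derivable_cst. Qed.

Lemma pderivable_onD f g :
  pderivable_on f -> pderivable_on g -> pderivable_on (fun w => f w + g w).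
Proof. by move=> df dg x Ux k; apply: derivableD; [apply: df | apply: dg]. Qed.

Lemma pderivable_onN f : pderivable_on f -> pderivable_on (fun w => - f w).
Proof. by move=> df x Ux k; apply: derivableN; apply: df. Qed.

Lemma pderivable_onB f g :
  pderivable_on f -> pderivable_on g -> pderivable_on (fun w => f w - g w).
Proof. by move=> df dg; apply: pderivable_onD => //; apply: pderivable_onN. Qed.

Lemma pderivable_onM f g :
  pderivable_on f -> pderivable_on g -> pderivable_on (fun w => f w * g w).
Proof. by move=> df dg x Ux k; apply: derivableM; [apply: df | apply: dg]. Qed.

Lemma pderivable_onV f : (forall x, U x -> f x != 0) ->
  pderivable_on f -> pderivable_on (fun w => (f w)^-1).
Proof. by move=> f0 df x Ux k; apply: derivableV; [apply: f0 | apply: df]. Qed.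

Lemma pderivable_on_sum (F : 'I_n -> 'rV[R]_n -> R) :
  (forall i, pderivable_on (F i)) -> pderivable_on (fun w => \sum_i F i w).
Proof. by move=> dF x Ux k; apply: derivable_big_sum => i _; apply: dF. Qed.

Lemma pderivable_on_det m (M : 'rV[R]_n -> 'M[R]_m) :
  (forall i j, pderivable_on (fun w => M w i j)) -> pderivable_on (fun w => \det (M w)).
Proof. by move=> dM x Ux k; apply: derivable_det => i j; apply: dM. Qed.

Lemma pdD f g x k : derivable f x (ecoord R k) -> derivable g x (ecoord R k) ->
  pd k (fun w => f w + g w) x = pd k f x + pd k g x.
Proof. exact: deriveD. Qed.

Lemma pdN f x k : derivable f x (ecoord R k) -> pd k (fun w => - f w) x = - pd k f x.
Proof. exact: deriveN. Qed.

Lemma pdB f g x k : derivable f x (ecoord R k) -> derivable g x (ecoord R k) ->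
  pd k (fun w => f w - g w) x = pd k f x - pd k g x.
Proof. exact: deriveB. Qed.

Lemma pd_cst (r : R) x k : pd k (fun=> r) x = 0.
Proof. exact: derive_cst. Qed.

Lemma pdM f g x k : derivable f x (ecoord R k) -> derivable g x (ecoord R k) ->
  pd k (fun w => f w * g w) x = f x * pd k g x + g x * pd k f x.
Proof. exact: deriveM. Qed.

Lemma pdV f x k : f x != 0 -> derivable f x (ecoord R k) ->
  pd k (fun w => (f w)^-1) x = - (f x)^-1 ^+ 2 * pd k f x.
Proof. by move=> f0 df; rewrite /pd deriveV // exprVn. Qed.

Lemma pd_sum (F : 'I_n -> 'rV[R]_n -> R) x k :
  (forall i, derivable (F i) x (ecoord R k)) ->
  pd k (fun w => \sum_i F i w) x = \sum_i pd k (F i) x.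
Proof. by move=> dF; rewrite /pd -fct_sumE derive_sum. Qed.

Lemma pd_eq_on f g x k : open U -> U x -> (forall w, U w -> f w = g w) -> pd k f x = pd k g x.
Proof.
move=> oU Ux fg; apply: near_eq_derive.
exact: filterS (open_nbhs_nbhs (conj oU Ux)).
Qed.

Lemma pderivable_on_eq f g : open U -> (forall w, U w -> f w = g w) ->
  pderivable_on f -> pderivable_on g.
Proof.
move=> oU fg df x Ux k; apply: near_eq_derivable (df x Ux k).
exact: filterS (open_nbhs_nbhs (conj oU Ux)).
Qed.

End PartialDerivatives.

Section ConformalChange.
#[local] Set Implicit Arguments.
#[local] Unset Strict Implicit.
Context {R : realType} {n : nat}.
Variables (U : set 'rV[R]_n) (a : 'rV[R]_n -> 'M[R]_n) (b : 'rV[R]_n -> 'rV[R]_n)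
  (c : 'rV[R]_n -> R) (mu : R).
Hypotheses (U_open : open U) (a_riem : riemannian_on U a) (b_form : oneform_on U b)
  (b_gt0 : forall x, U x -> 0 < formnorm a b x)
  (b_cov : forall x, U x -> forall i j, covd a b x i j = c x * a x i j)
  (c_sqr : forall x, U x -> c x ^+ 2 = - mu * formnorm a b x ^+ 2)
  (mu_neq0 : mu != 0).
Implicit Types (x w : 'rV[R]_n) (F : 'I_n -> R).
Local Notation pderivable := (pderivable_on U).

Definition bup x := b x *m invmx (a x).
Definition bnorm2 x := (b x *m invmx (a x) *m (b x)^T) 0 0.
Definition conf x := (bnorm2 x)^-1.
Definition phi_low x j := c x * conf x * b x 0 j.
Definition phi_up x i := c x * conf x * bup x 0 i.
Definition abar x := (formnorm a b x ^+ 2)^-1 *: a x.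
Definition bbar x := (formnorm a b x ^+ 2)^-1 *: b x.

Lemma a_sym x j k : U x -> a x j k = a x k j.
Proof. by move=> Ux; have := congr1 (fun M : 'M[R]_n => M k j) (a_riem.2.1 x Ux); rewrite mxE. Qed.

Lemma a_unit x : U x -> a x \in unitmx.
Proof.
move=> Ux; rewrite -row_free_unit; apply: inj_row_free => v va0; apply/eqP.
apply: contraT => v0; have := a_riem.2.2 x Ux v v0.
by rewrite va0 mul0mx mxE ltxx.
Qed.

Lemma a_diag_gt0 x m : U x -> 0 < a x m m.
Proof.
move=> Ux; have e0 : 'e_m != 0 :> 'rV[R]_n.
  by apply/eqP => /matrixP /(_ 0 m); rewrite !mxE !eqxx => /eqP; rewrite oner_eq0.
by have := a_riem.2.2 x Ux _ e0; rewrite -rowE trmx_delta -colE !mxE.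
Qed.

Lemma ainv_sym x j k : U x -> invmx (a x) j k = invmx (a x) k j.
Proof.
by move=> Ux; have := congr1 (fun M : 'M[R]_n => M k j) (trmx_inv (a x)); rewrite mxE a_riem.2.1.
Qed.

Lemma sum_a_ainv x k l : U x -> \sum_p a x k p * invmx (a x) p l = kdelta k l.
Proof. by move=> Ux; have := congr1 (fun M : 'M[R]_n => M k l) (mulmxV (a_unit Ux)); rewrite !mxE. Qed.

Lemma sum_ainv_a x k l : U x -> \sum_p invmx (a x) k p * a x p l = kdelta k l.
Proof. by move=> Ux; have := congr1 (fun M : 'M[R]_n => M k l) (mulVmx (a_unit Ux)); rewrite !mxE. Qed.

Lemma sum_a_ainv_contract x F k : U x -> \sum_p a x k p * \sum_l invmx (a x) p l * F l = F k.
Proof.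
move=> Ux; transitivity (\sum_l (\sum_p a x k p * invmx (a x) p l) * F l).
  under eq_bigr do rewrite mulr_sumr.
  by rewrite exchange_big; apply: eq_bigr => l _; rewrite mulr_suml; apply: eq_bigr => p _; ring.
by under eq_bigr do rewrite sum_a_ainv //; rewrite sumr_kdeltal.
Qed.

Lemma sum_ainv_contract x F l : U x -> \sum_j (\sum_k F k * a x k j) * invmx (a x) j l = F l.
Proof.
move=> Ux; transitivity (\sum_k F k * \sum_j a x k j * invmx (a x) j l).
  under eq_bigr do rewrite mulr_suml.
  by rewrite exchange_big; apply: eq_bigr => k _; rewrite mulr_sumr; apply: eq_bigr => j _; ring.
by under eq_bigr do rewrite sum_a_ainv //; rewrite sumr_kdeltar.
Qed.

Lemma bnorm2_gt0 x : U x -> 0 < bnorm2 x.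
Proof.
move=> Ux; have := b_gt0 Ux; rewrite /formnorm -/(bnorm2 x).
by case: (lerP (bnorm2 x) 0) => // q0; rewrite ler0_sqrtr // ltxx.
Qed.

Lemma bnorm2_neq0 x : U x -> bnorm2 x != 0.
Proof. by move=> Ux; rewrite gt_eqF ?bnorm2_gt0. Qed.

Lemma formnorm_sqr x : U x -> formnorm a b x ^+ 2 = bnorm2 x.
Proof. by move=> Ux; rewrite /formnorm sqr_sqrtr // ltW ?bnorm2_gt0. Qed.

Lemma conf_bnorm2 x : U x -> conf x * bnorm2 x = 1.
Proof. by move=> Ux; rewrite /conf mulVf ?bnorm2_neq0. Qed.

Lemma bnorm2E x : bnorm2 x = \sum_k bup x 0 k * b x 0 k.
Proof. by rewrite /bnorm2 mxE; apply: eq_bigr => k _; rewrite [(b x)^T _ _]mxE. Qed.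

Lemma bupE x l : bup x 0 l = \sum_k b x 0 k * invmx (a x) k l.
Proof. by rewrite /bup mxE. Qed.

Lemma sum_bup_a x j : U x -> \sum_k bup x 0 k * a x k j = b x 0 j.
Proof.
move=> Ux; have := congr1 (fun M : 'M[R]_n => (b x *m M) 0 j) (mulVmx (a_unit Ux)).
by rewrite /= mulmx1 mulmxA => <-; rewrite [RHS]mxE.
Qed.

Lemma mu_conf x : U x -> mu = - c x ^+ 2 * conf x.
Proof.
move=> Ux; rewrite c_sqr // formnorm_sqr // !mulNr opprK -mulrA (mulrC (bnorm2 x)).
by rewrite conf_bnorm2 // mulr1.
Qed.

Lemma c_neq0 x : U x -> c x != 0.
Proof.
move=> Ux; apply: contra_neq mu_neq0 => c0.
by have := mu_conf Ux; rewrite c0 expr0n /= oppr0 mul0r.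
Qed.

Lemma pderivable_a i j : pderivable (fun w => a w i j).
Proof. by move=> x Ux; apply: (a_riem.1 i j [::] x Ux).2. Qed.

Lemma pderivable_pd_a m i j : pderivable (pd m (fun w => a w i j)).
Proof. by move=> x Ux; apply: (a_riem.1 i j [:: m] x Ux).2. Qed.

Lemma pderivable_b j : pderivable (fun w => b w 0 j).
Proof. by move=> x Ux; apply: (b_form j [::] Ux).2. Qed.

Lemma pderivable_pd_b m j : pderivable (pd m (fun w => b w 0 j)).
Proof. by move=> x Ux; apply: (b_form j [:: m] Ux).2. Qed.

Lemma pderivable_ainv i j : pderivable (fun w => invmx (a w) i j).
Proof.
apply: (@pderivable_on_eq _ _ _ (fun w => (\det (a w))^-1 * cofactor (a w) j i)) => //.
  by move=> w Uw; rewrite /invmx a_unit // !mxE.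
apply: pderivable_onM; first apply: pderivable_onV.
- by move=> w Uw; rewrite -unitfE -unitmxE a_unit.
- by apply: pderivable_on_det => r s; apply: pderivable_a.
- rewrite /cofactor; apply: pderivable_onM; first exact: pderivable_on_cst.
  apply: pderivable_on_det => r s.
  by apply: (@pderivable_on_eq _ _ _ (fun w => a w (lift j r) (lift i s))) => // [w _|];
    rewrite ?mxE //; apply: pderivable_a.
Qed.

Lemma pderivable_christoffel i j k : pderivable (christoffel a i j k).
Proof.
apply: pderivable_onM; first exact: pderivable_on_cst.
apply: pderivable_on_sum => l; apply: pderivable_onM; first exact: pderivable_ainv.
by apply: pderivable_onB; [apply: pderivable_onD|]; apply: pderivable_pd_a.
Qed.

Lemma pderivable_bup i : pderivable (fun w => bup w 0 i).
Proof.
apply: (@pderivable_on_eq _ _ _ (fun w => \sum_k b w 0 k * invmx (a w) k i)) => //.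
  by move=> w _; rewrite bupE.
by apply: pderivable_on_sum => k; apply: pderivable_onM; [apply: pderivable_b | apply: pderivable_ainv].
Qed.

Lemma pderivable_bnorm2 : pderivable bnorm2.
Proof.
apply: (@pderivable_on_eq _ _ _ (fun w => \sum_k bup w 0 k * b w 0 k)) => //.
  by move=> w _; rewrite bnorm2E.
by apply: pderivable_on_sum => k; apply: pderivable_onM; [apply: pderivable_bup | apply: pderivable_b].
Qed.

Lemma pderivable_conf : pderivable conf.
Proof. by apply: pderivable_onV; [exact: bnorm2_neq0 | exact: pderivable_bnorm2]. Qed.

Lemma pderivable_c : pderivable c.
Proof.
move=> x Ux k.
have dq : pderivable (fun w => covd a b w k k * (a w k k)^-1).
  apply: pderivable_onM; last first.
    by apply: pderivable_onV => [w Uw|]; [rewrite gt_eqF ?a_diag_gt0 | apply: pderivable_a].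
  apply: pderivable_onB; first exact: pderivable_pd_b.
  apply: pderivable_on_sum => p.
  by apply: pderivable_onM; [apply: pderivable_christoffel | apply: pderivable_b].
apply: (@pderivable_on_eq _ _ U _ c U_open _ dq x Ux k) => w Uw.
by rewrite b_cov // mulfK // gt_eqF ?a_diag_gt0.
Qed.

Lemma pderivable_phi_low j : pderivable (fun w => phi_low w j).
Proof.
apply: pderivable_onM; last exact: pderivable_b.
by apply: pderivable_onM; [exact: pderivable_c | exact: pderivable_conf].
Qed.

Lemma pderivable_phi_up i : pderivable (fun w => phi_up w i).
Proof.
apply: pderivable_onM; last exact: pderivable_bup.
by apply: pderivable_onM; [exact: pderivable_c | exact: pderivable_conf].
Qed.

Lemma pderivable_conf_shift i j k :
  pderivable (fun w => conf_shift (a w) (phi_low w) (phi_up w) i j k).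
Proof.
rewrite /conf_shift; apply: pderivable_onD; first apply: pderivable_onB.
- apply: pderivable_onM; last exact: pderivable_on_cst.
  by apply: pderivable_onN; apply: pderivable_phi_low.
- by apply: pderivable_onM; [apply: pderivable_phi_low | apply: pderivable_on_cst].
- by apply: pderivable_onM; [apply: pderivable_a | apply: pderivable_phi_up].
Qed.

Lemma pd_a_sym x m j k : U x -> pd m (fun w => a w j k) x = pd m (fun w => a w k j) x.
Proof. by move=> Ux; apply: (pd_eq_on _ U_open Ux) => w Uw; apply: a_sym. Qed.

Lemma christoffel_sym x i j k : U x -> christoffel a i j k x = christoffel a i k j x.
Proof.
move=> Ux; rewrite /christoffel; congr (_ * _); apply: eq_bigr => l _.
by rewrite (pd_a_sym l j k Ux) (addrC (pd j _ x)).
Qed.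

Lemma sum_a_christoffel x k j m : U x -> \sum_p a x k p * christoffel a p j m x =
  2^-1 * (pd j (fun w => a w k m) x + pd m (fun w => a w k j) x - pd k (fun w => a w j m) x).
Proof.
move=> Ux; rewrite /christoffel; under eq_bigr do rewrite mulrCA.
rewrite -mulr_sumr (sum_a_ainv_contract
  (fun l => pd j (fun w => a w l m) x + pd m (fun w => a w l j) x - pd l (fun w => a w j m) x)) //.
Qed.

(* Metric compatibility of the Levi-Civita connection: a_{jk|m} = 0. *)
Lemma pd_a_compat x m j k : U x -> pd m (fun w => a w j k) x =
  \sum_p (a x p k * christoffel a p j m x + a x j p * christoffel a p k m x).
Proof.
move=> Ux; rewrite big_split /=; under eq_bigr do rewrite (a_sym _ k Ux).
rewrite !sum_a_christoffel // (pd_a_sym m k j Ux) (pd_a_sym j k m Ux) (pd_a_sym k j m Ux).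
by field.
Qed.

Lemma pd_b x m j : U x ->
  pd m (fun w => b w 0 j) x = c x * a x j m + \sum_p christoffel a p j m x * b x 0 p.
Proof. by move=> Ux; rewrite -b_cov // /covd subrK. Qed.

Lemma sum_pd_bup_a x m j : U x ->
  \sum_k pd m (fun w => bup w 0 k) x * a x k j =
  \sum_k (c x * kdelta m k - \sum_p christoffel a k p m x * bup x 0 p) * a x k j.
Proof.
move=> Ux; pose X p := \sum_k christoffel a p k m x * bup x 0 k.
have leibniz : \sum_k (bup x 0 k * pd m (fun w => a w k j) x
                     + a x k j * pd m (fun w => bup w 0 k) x) = pd m (fun w => b w 0 j) x.
  have -> : pd m (fun w => b w 0 j) x = pd m (fun w => \sum_k bup w 0 k * a w k j) x.
    by apply: (pd_eq_on _ U_open Ux) => w Uw; rewrite sum_bup_a.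
  rewrite pd_sum => [|k]; last by apply: derivableM; [apply: pderivable_bup | apply: pderivable_a].
  by apply: eq_bigr => k _; rewrite pdM; [|apply: pderivable_bup | apply: pderivable_a].
have -> : \sum_k pd m (fun w => bup w 0 k) x * a x k j =
    pd m (fun w => b w 0 j) x - \sum_k bup x 0 k * pd m (fun w => a w k j) x.
  by rewrite -leibniz big_split /= addrC addrK; apply: eq_bigr => k _; ring.
have -> : \sum_k bup x 0 k * pd m (fun w => a w k j) x =
    \sum_p X p * a x p j + \sum_p christoffel a p j m x * b x 0 p.
  under eq_bigr do rewrite pd_a_compat // mulr_sumr.
  rewrite exchange_big /= -big_split; apply: eq_bigr => p _ /=.
  rewrite -(sum_bup_a p Ux) /X mulr_suml mulr_sumr -big_split /=.
  by apply: eq_bigr => k _; ring.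
rewrite pd_b //; under [RHS]eq_bigr do rewrite mulrBl.
rewrite sumrB /X.
have -> : \sum_k c x * kdelta m k * a x k j = c x * a x j m.
  rewrite -(a_sym m j Ux) -(sumr_kdeltal (fun k => a x k j) m) mulr_sumr.
  by apply: eq_bigr => k _; ring.
ring.
Qed.

Lemma pd_bup x m l : U x ->
  pd m (fun w => bup w 0 l) x = c x * kdelta l m - \sum_k christoffel a l k m x * bup x 0 k.
Proof.
move=> Ux; have := sum_ainv_contract (fun k => pd m (fun w => bup w 0 k) x) l Ux.
under eq_bigr do rewrite sum_pd_bup_a //.
by rewrite sum_ainv_contract // => <-; rewrite kdeltaC.
Qed.

Lemma pd_bnorm2 x m : U x -> pd m bnorm2 x = 2 * c x * b x 0 m.
Proof.
move=> Ux.
have -> : pd m bnorm2 x = pd m (fun w => \sum_k bup w 0 k * b w 0 k) x.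
  by apply: (pd_eq_on _ U_open Ux) => w _; rewrite bnorm2E.
rewrite pd_sum => [|k]; last by apply: derivableM; [apply: pderivable_bup | apply: pderivable_b].
transitivity (\sum_k (bup x 0 k * (c x * a x k m)
    + bup x 0 k * \sum_p christoffel a p k m x * b x 0 p
    + (b x 0 k * (c x * kdelta k m) - b x 0 k * \sum_p christoffel a k p m x * bup x 0 p))).
  apply: eq_bigr => k _; rewrite pdM; [|apply: pderivable_bup|apply: pderivable_b] => //.
  by rewrite pd_b // pd_bup //; ring.
rewrite big_split big_split sumrB /=.
have -> : \sum_k bup x 0 k * (c x * a x k m) = c x * b x 0 m.
  by rewrite -(sum_bup_a m Ux) mulr_sumr; apply: eq_bigr => k _; ring.
have -> : \sum_k b x 0 k * (c x * kdelta k m) = c x * b x 0 m.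
  by rewrite -(sumr_kdeltar (fun k => b x 0 k) m) mulr_sumr; apply: eq_bigr => k _; ring.
have -> : \sum_k b x 0 k * \sum_p christoffel a k p m x * bup x 0 p =
          \sum_k bup x 0 k * \sum_p christoffel a p k m x * b x 0 p.
  under eq_bigr do rewrite mulr_sumr.
  rewrite exchange_big /=; apply: eq_bigr => k _; rewrite mulr_sumr.
  by apply: eq_bigr => p _; ring.
ring.
Qed.

Lemma pd_conf x m : U x -> pd m conf x = - conf x ^+ 2 * (2 * c x * b x 0 m).
Proof.
move=> Ux; rewrite /conf pdV ?bnorm2_neq0 ?pd_bnorm2 //.
exact: pderivable_bnorm2.
Qed.

(* Differentiating c^2 = - mu |b|^2 and dividing by 2c. *)
Lemma pd_c x m : U x -> pd m c x = - mu * b x 0 m.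
Proof.
move=> Ux; have dc : derivable c x (ecoord R m) by apply: pderivable_c.
have : pd m (fun w => c w * c w) x = pd m (fun w => - mu * bnorm2 w) x.
  by apply: (pd_eq_on _ U_open Ux) => w Uw; rewrite -expr2 c_sqr // formnorm_sqr.
rewrite pdM // pdM ?pd_cst ?pd_bnorm2 //; last exact: pderivable_bnorm2.
move=> e; have c2 : 2 * c x != 0 by rewrite mulf_neq0 ?pnatr_eq0 ?c_neq0.
apply: (mulfI c2); transitivity (c x * pd m c x + c x * pd m c x); first by ring.
by rewrite e; ring.
Qed.

Lemma pd_phi_low x m j : U x -> pd m (fun w => phi_low w j) x =
  \sum_p christoffel a p j m x * phi_low x p - phi_low x j * phi_low x m - mu * a x j m.
Proof.
move=> Ux; have dc : derivable c x (ecoord R m) by apply: pderivable_c.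
have ds : derivable conf x (ecoord R m) by apply: pderivable_conf.
rewrite /phi_low pdM; [|exact: derivableM|exact: pderivable_b].
rewrite pdM // pd_c // pd_conf // pd_b //.
have -> : \sum_p christoffel a p j m x * (c x * conf x * b x 0 p) =
          c x * conf x * \sum_p christoffel a p j m x * b x 0 p.
  by rewrite mulr_sumr; apply: eq_bigr => p _; ring.
by rewrite (mu_conf Ux); ring.
Qed.

Lemma pd_phi_up x m i : U x -> pd m (fun w => phi_up w i) x =
  - (\sum_p christoffel a i m p x * phi_up x p) - phi_up x i * phi_low x m - mu * kdelta i m.
Proof.
move=> Ux; have dc : derivable c x (ecoord R m) by apply: pderivable_c.
have ds : derivable conf x (ecoord R m) by apply: pderivable_conf.
rewrite /phi_up pdM; [|exact: derivableM|exact: pderivable_bup].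
rewrite pdM // pd_c // pd_conf // pd_bup //.
have -> : \sum_p christoffel a i m p x * (c x * conf x * bup x 0 p) =
          c x * conf x * \sum_k christoffel a i k m x * bup x 0 k.
  by rewrite mulr_sumr; apply: eq_bigr => p _; rewrite (christoffel_sym i m p Ux); ring.
by rewrite /phi_low (mu_conf Ux); ring.
Qed.

Lemma sum_a_phi_up x j : U x -> \sum_i a x j i * phi_up x i = phi_low x j.
Proof.
move=> Ux; rewrite /phi_low -(sum_bup_a j Ux) mulr_sumr.
by apply: eq_bigr => l _; rewrite /phi_up (a_sym j l Ux); ring.
Qed.

Lemma sum_phi_low_up x : U x -> \sum_i phi_low x i * phi_up x i = - mu.
Proof.
move=> Ux; rewrite (mu_conf Ux).
transitivity (c x ^+ 2 * conf x * (conf x * bnorm2 x)).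
  by rewrite bnorm2E !mulr_sumr; apply: eq_bigr => l _; rewrite /phi_low /phi_up; ring.
by rewrite conf_bnorm2 // mulr1 mulNr opprK.
Qed.

Lemma pd_abar x m l k : U x ->
  pd m (fun w => abar w l k) x = conf x * pd m (fun w => a w l k) x + a x l k * pd m conf x.
Proof.
move=> Ux; have -> : pd m (fun w => abar w l k) x = pd m (fun w => conf w * a w l k) x.
  by apply: (pd_eq_on _ U_open Ux) => w Uw; rewrite /abar mxE formnorm_sqr.
by rewrite pdM; [|exact: pderivable_conf|exact: pderivable_a].
Qed.

Lemma invmx_abar x : U x -> invmx (abar x) = bnorm2 x *: invmx (a x).
Proof.
move=> Ux; rewrite /abar formnorm_sqr // invmxZ ?invrK //.
by rewrite unitmxZ ?a_unit // unitfE invr_eq0 bnorm2_neq0.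
Qed.

Lemma christoffel_abar x i j k : U x ->
  christoffel abar i j k x = christoffel a i j k x + conf_shift (a x) (phi_low x) (phi_up x) i j k.
Proof.
move=> Ux; rewrite /christoffel invmx_abar //.
under eq_bigr => l _ do rewrite !pd_abar // !pd_conf // mxE.
pose F l := pd j (fun w => a w l k) x + pd k (fun w => a w l j) x - pd l (fun w => a w j k) x.
transitivity (2^-1 * (\sum_l ((conf x * bnorm2 x) * (invmx (a x) i l * F l)) -
   \sum_l (2 * (conf x * bnorm2 x) * conf x * c x) *
     (b x 0 j * (invmx (a x) i l * a x l k) + b x 0 k * (invmx (a x) i l * a x l j)
      - a x j k * (invmx (a x) i l * b x 0 l)))).
  by congr (_ * _); rewrite -sumrB; apply: eq_bigr => l _; rewrite /F; ring.
rewrite conf_bnorm2 // -!mulr_sumr sumrB big_split /= -!mulr_sumr !sum_ainv_a //.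
have -> : \sum_l invmx (a x) i l * b x 0 l = bup x 0 i.
  by rewrite bupE; apply: eq_bigr => l _; rewrite (ainv_sym i l Ux) mulrC.
have -> : \sum_l invmx (a x) i l * (pd j (fun w => a w l k) x + pd k (fun w => a w l j) x
            - pd l (fun w => a w j k) x) = \sum_l invmx (a x) i l * F l by [].
by rewrite /conf_shift /phi_low /phi_up /kdelta; field.
Qed.

Lemma pd_conf_shift x m i j k : U x ->
  pd m (fun w => conf_shift (a w) (phi_low w) (phi_up w) i j k) x =
  - pd m (fun w => phi_low w j) x * kdelta i k - pd m (fun w => phi_low w k) x * kdelta i j
  + pd m (fun w => a w j k) x * phi_up x i + a x j k * pd m (fun w => phi_up w i) x.
Proof.
(* Side conditions are closed by explicit terms: [done] would try to convert the
   goal with unrelated [derivable] hypotheses, which takes forever. *)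
move=> Ux; have dcst (r : R) : derivable (fun=> r) x (ecoord R m) by exact: derivable_cst.
have dj : derivable (fun w => phi_low w j) x (ecoord R m) by apply: pderivable_phi_low.
have dk : derivable (fun w => phi_low w k) x (ecoord R m) by apply: pderivable_phi_low.
have di : derivable (fun w => phi_up w i) x (ecoord R m) by apply: pderivable_phi_up.
have da : derivable (fun w => a w j k) x (ecoord R m) by apply: pderivable_a.
have dNj : derivable (fun w => - phi_low w j) x (ecoord R m) by apply: derivableN; exact: dj.
have d1 : derivable (fun w => - phi_low w j * kdelta i k) x (ecoord R m).
  by apply: derivableM; [exact: dNj | exact: dcst].
have d2 : derivable (fun w => phi_low w k * kdelta i j) x (ecoord R m).
  by apply: derivableM; [exact: dk | exact: dcst].
have d3 : derivable (fun w => a w j k * phi_up w i) x (ecoord R m).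
  by apply: derivableM; [exact: da | exact: di].
have d12 : derivable (fun w => - phi_low w j * kdelta i k - phi_low w k * kdelta i j)
    x (ecoord R m) by apply: derivableB; [exact: d1 | exact: d2].
rewrite /conf_shift (pdD d12 d3) (pdB d1 d2) (pdM dNj (dcst _)) (pdM dk (dcst _)).
by rewrite (pdM da di) (pdN dj) !pd_cst; ring.
Qed.

Lemma pd_christoffel_abar x m i j k : U x ->
  pd m (christoffel abar i j k) x = pd m (christoffel a i j k) x
  + dconf_shift (fun i j k => christoffel a i j k x) (a x) (phi_low x) (phi_up x) mu m i j k.
Proof.
move=> Ux.
have -> : pd m (christoffel abar i j k) x = pd m (fun w => christoffel a i j k w
            + conf_shift (a w) (phi_low w) (phi_up w) i j k) x.
  by apply: (pd_eq_on _ U_open Ux) => w Uw; rewrite christoffel_abar.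
have dG : derivable (christoffel a i j k) x (ecoord R m) by apply: pderivable_christoffel.
have dS : derivable (fun w => conf_shift (a w) (phi_low w) (phi_up w) i j k) x (ecoord R m).
  by apply: pderivable_conf_shift.
by rewrite (pdD dG dS) pd_conf_shift // !pd_phi_low // pd_phi_up // pd_a_compat.
Qed.

Hypothesis a_curv : forall x, U x -> forall y i j,
  riemann a x y i j = mu * (alpha2 a x y * (i == j)%:R - y 0 i * ylow a x y j).

Lemma riemann_abar x y i k : U x -> riemann abar x y i k = 0.
Proof.
move=> Ux; pose G i j k := christoffel a i j k x.
pose dG m i j k := pd m (christoffel a i j k) x.
have -> : riemann abar x y i k = spray_curvature (fun j => y 0 j)
    (Gconf G (a x) (phi_low x) (phi_up x)) (dGconf G dG (a x) (phi_low x) (phi_up x) mu) i k.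
  transitivity (spray_curvature (fun j => y 0 j) (fun i j k => christoffel abar i j k x)
                  (fun m i j k => pd m (christoffel abar i j k) x) i k); first by [].
  congr spray_curvature; do 3 apply/funext => ?; first exact: christoffel_abar.
  by apply/funext => ?; apply: pd_christoffel_abar.
rewrite spray_curvature_conf.
- by rewrite -[spray_curvature _ G dG i k]/(riemann a x y i k) a_curv // subrr.
- by move=> i' j' k'; apply: christoffel_sym.
- by move=> j' k'; apply: a_sym.
- by move=> j'; apply: sum_a_phi_up.
- exact: sum_phi_low_up.
Qed.

Lemma covd_abar_bbar x i j : U x -> covd abar bbar x i j = 0.
Proof.
move=> Ux; rewrite /covd.
have -> : pd j (fun w => bbar w 0 i) x = conf x * pd j (fun w => b w 0 i) x + b x 0 i * pd j conf x.
  have -> : pd j (fun w => bbar w 0 i) x = pd j (fun w => conf w * b w 0 i) x.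
    by apply: (pd_eq_on _ U_open Ux) => w Uw; rewrite /bbar mxE formnorm_sqr.
  by rewrite pdM; [|apply: pderivable_conf|apply: pderivable_b].
have -> : \sum_k christoffel abar k i j x * bbar x 0 k =
    conf x * \sum_k christoffel a k i j x * b x 0 k
    + conf x * (- phi_low x i * b x 0 j - phi_low x j * b x 0 i + a x i j * (c x * conf x * bnorm2 x)).
  transitivity (\sum_k (conf x * (christoffel a k i j x * b x 0 k)
      + (- phi_low x i * conf x) * (b x 0 k * kdelta k j)
      + (- phi_low x j * conf x) * (b x 0 k * kdelta k i)
      + (a x i j * conf x * c x * conf x) * (bup x 0 k * b x 0 k))).
    apply: eq_bigr => k _; rewrite christoffel_abar // /bbar mxE formnorm_sqr // -/(conf x).
    by rewrite /conf_shift /phi_up; ring.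
  by rewrite !big_split /= -!mulr_sumr !sumr_kdeltar -bnorm2E; ring.
rewrite pd_b // pd_conf // /phi_low.
transitivity (a x i j * c x * conf x * (1 - conf x * bnorm2 x)); first by ring.
by rewrite conf_bnorm2 // subrr mulr0.
Qed.

Lemma formnorm_abar_bbar x : U x -> formnorm abar bbar x = 1.
Proof.
move=> Ux; rewrite /formnorm invmx_abar // /bbar formnorm_sqr // -/(conf x).
have -> : (conf x *: b x)^T = conf x *: (b x)^T by apply/matrixP => ? ?; rewrite !mxE.
rewrite -!scalemxAl -?scalemxAr -?scalemxAl -?scalemxAr -?scalemxAl -?scalemxAr !mxE.
rewrite [\sum_j _](_ : _ = bnorm2 x); last by rewrite /bnorm2 mxE.
have -> : conf x * (conf x * (bnorm2 x * bnorm2 x)) = (conf x * bnorm2 x) ^+ 2 by ring.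
by rewrite conf_bnorm2 // expr1n sqrtr1.
Qed.

End ConformalChange.

Theorem lemma3p4 (R : realType) (n : nat) (U : set 'rV[R]_n)
  (a : 'rV[R]_n -> 'M[R]_n) (b : 'rV[R]_n -> 'rV[R]_n)
  (c : 'rV[R]_n -> R) (mu kappa : R) :
  open U ->
  riemannian_on U a ->
  oneform_on U b ->
  (forall x, U x -> 0 < formnorm a b x) ->
  (forall x, U x -> forall (y : 'rV[R]_n) (i j : 'I_n),
      riemann a x y i j =
      mu * (alpha2 a x y * (i == j)%:R - y 0 i * ylow a x y j)) ->
  (forall x, U x -> forall i j : 'I_n, covd a b x i j = c x * a x i j) ->
  (forall x, U x -> c x ^+ 2 = kappa - mu * formnorm a b x ^+ 2) ->
  mu < 0 -> kappa = 0 ->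
  let abar := fun x => (formnorm a b x ^+ 2)^-1 *: a x in
  let bbar := fun x => (formnorm a b x ^+ 2)^-1 *: b x in
  (forall x, U x -> forall (y : 'rV[R]_n) (i j : 'I_n),
      riemann abar x y i j = 0) /\
  (forall x, U x -> forall i j : 'I_n, covd abar bbar x i j = 0) /\
  (forall x, U x -> formnorm abar bbar x = 1).
Proof.
move=> U_open a_riem b_form b_gt0 a_curv b_cov c_sqr mu_lt0 kappa0 abar' bbar'.
have c_sqr0 x : U x -> c x ^+ 2 = - mu * formnorm a b x ^+ 2.
  by move=> Ux; rewrite c_sqr // kappa0 sub0r mulNr.
have mu_neq0 : mu != 0 by rewrite lt_eqF.
split; [|split] => x Ux.
- move=> y i j.
  exact: (riemann_abar U_open a_riem b_form b_gt0 b_cov c_sqr0 mu_neq0 a_curv y i j Ux).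
- by move=> i j; apply: (covd_abar_bbar U_open a_riem b_form b_gt0 b_cov).
- exact: (formnorm_abar_bbar a_riem b_gt0).
Qed.
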